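(* Suppose that the set $\mathbb{X}_f\subseteq\mathbb{X}$ satisfies the terminal set assumption below, that $\overline{\Delta}\ge M$, and that there exist matrices $X=X^\top\succ 0$ in $\mathbb{R}^{n\times n}$ and $Y\in\mathbb{R}^{m\times n}$ such that for all $p\in\{1,\dots,P+1\}$ $$\begin{bmatrix} X & 0 & 0 & A_{pM}X+B_{pM}Y \\ 0 & \tilde Q_{pM} & \tilde S_{pM} & X \\ 0 & \tilde S_{pM}^\top & \tilde R_{pM} & Y \\ (A_{pM}X+B_{pM}Y)^\top & X & Y^\top & X\end{bmatrix}\succeq 0 .$$ Set $P_f:=X^{-1}$ and $K_f:=YX^{-1}$. Then: (i) $\kappa_f(\Xi_f)\subseteq \Pi$; (ii) $f^{\kappa_f}_p(\Xi_f)\subseteq \Xi_f$ for all $p\in\{1,\dots,P+1\}$; (iii) for all $\xi=(x,w,\beta)\in\Xi_f$ and all $j\in\{1,\dots,M-1\}$, $f(\xi,(K_fx,j),1)\in\Xi$; and for all $\xi\in\Xi_f$, all $p\in\{1,\dots,P\}$, all $j\in\{1,\dots,M-1\}$ and any $v$, $f(f^{\kappa_f}_p(\xi),(v,j),0)\in\Xi$; (iv) for all $p\in\{1,\dots,P+1\}$ and all $\xi\in\Xi_f$, $$V_f(f^{\kappa_f}_p(\xi))-V_f(\xi)\le -\lambda(\xi,\kappa_f(\xi),1)-\sum_{i=1}^{p-1}\lambda\big(f^{\kappa_f}_i(\xi),\kappa_f(\xi),0\big).$$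
   Context: Plant: $x(t+1)=Ax(t)+Bu(t)$, $A\in\mathbb{R}^{n\times n}$, $B\in\mathbb{R}^{n\times m}$, with state constraint set $\mathbb{X}\subseteq\mathbb{R}^n$ and input constraint set $\mathbb{U}\subseteq\mathbb{R}^m$, both closed and containing the origin; cost matrices $Q\succ0$, $R\succ 0$. Token bucket parameters: integers $g\ge1$, $c\ge g$, $b\ge c$; $M:=\lceil c/g\rceil$. $P\in\mathbb{N}_0$ is the maximal number of consecutive packet losses; $\overline{\Delta}\in\mathbb{N}$ is the maximal sampling interval. Overall state $\xi=(x,w,\beta)\in\mathbb{R}^n\times\mathbb{R}^m\times\mathbb{Z}$, overall input $\pi=(v,\Delta)\in\mathbb{R}^m\times\mathbb{N}$, packet-loss variable $\sigma\in\{0,1\}$. Constraint sets: $\Xi:=\mathbb{X}\times\mathbb{U}\times\{0,1,\dots,b\}$, $\Pi:=\mathbb{U}\times\{1,\dots,\overline{\Delta}\}$. For $j\in\mathbb{N}_0$: $A_j:=A^j$, $B_j:=\sum_{i=0}^{j-1}A^iB$ (so $B_0=0$). Transition map: $f(\xi,(v,j),\sigma):=\big(A_jx+(1-\sigma)B_jw+\sigma B_jv,\ (1-\sigma)w+\sigma v,\ \min\{\beta+jg-c,b\}\big)$. Stage cost $\ell(\xi,\pi,\sigma):=x^\top Qx+(1-\sigma)w^\top Rw+\sigma v^\top Rv$, and interval cost $\lambda(\xi,\pi,\sigma):=\ell(\xi,\pi,\sigma)+\sum_{j=1}^{\Delta-1}\ell(f(\xi,(v,j),\sigma),\pi,\sigma)$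 for $\pi=(v,\Delta)$. For $i\in\mathbb{N}$: $Q_i:=\sum_{j=0}^{i-1}A_j^\top QA_j$, $S_i:=\sum_{j=1}^{i-1}A_j^\top QB_j$, $R_i:=iR+\sum_{j=1}^{i-1}B_j^\top QB_j$, and $\begin{bmatrix}\tilde Q_i&\tilde S_i\\ \tilde S_i^\top&\tilde R_i\end{bmatrix}:=\begin{bmatrix}Q_i&S_i\\ S_i^\top&R_i\end{bmatrix}^{-1}$. Terminal ingredients: for a gain $K_f\in\mathbb{R}^{m\times n}$, $\kappa_f(\xi):=(K_fx,M)$; $\Xi_f:=\mathbb{X}_f\times\mathbb{U}\times\{c-g,\dots,b\}$; $V_f(\xi):=x^\top P_fx$ with $P_f\succ0$. Iterates: $f^{\kappa_f}_1(\xi):=f(\xi,\kappa_f(\xi),1)$ and $f^{\kappa_f}_p(\xi):=f(f^{\kappa_f}_{p-1}(\xi),(v,M),0)$ for $p\in\{2,\dots,P+1\}$ (the value of $v$ is irrelevant since $\sigma=0$). Terminal set assumption: $\mathbb{X}_f\subseteq\mathbb{X}$ is closed, contains the origin, $K_f\mathbb{X}_f\subseteq\mathbb{U}$, $(A_{pM}+B_{pM}K_f)\mathbb{X}_f\subseteq\mathbb{X}_f$ for all $p\in\{1,\dots,P+1\}$, and $(A_{pM+j}+B_{pM+j}K_f)\mathbb{X}_f\subseteq\mathbb{X}$ for all $j\in\{1,\dots,M-1\}$ and all $p\in\{0,\dots,P\}$ (here $K_f=YX^{-1}$). *)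

From HB Require Import structures.
From mathcomp Require Import all_boot all_order all_algebra.
From mathcomp Require Import all_classical all_reals all_analysis.
Set Implicit Arguments. Unset Strict Implicit. Unset Printing Implicit Defensive.
Import Order.TTheory GRing.Theory Num.Theory.
Import numFieldNormedType.Exports.
Local Open Scope ring_scope.
Local Open Scope classical_set_scope.

Definition tb_psd (R : realFieldType) (k : nat) (Mx : 'M[R]_k) : Prop :=
  Mx^T = Mx /\ forall v : 'cV[R]_k, 0 <= (v^T *m Mx *m v) 0 0.

Definition tb_pd (R : realFieldType) (k : nat) (Mx : 'M[R]_k) : Prop :=
  Mx^T = Mx /\ forall v : 'cV[R]_k, v != 0 -> 0 < (v^T *m Mx *m v) 0 0.

Definition tb_Apow (R : realFieldType) (n : nat) (A : 'M[R]_n) (j : nat) : 'M[R]_n :=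
  iter j (mulmx A) 1%:M.

Definition tb_Bsum (R : realFieldType) (n m : nat) (A : 'M[R]_n) (B : 'M[R]_(n, m))
  (j : nat) : 'M[R]_(n, m) :=
  \sum_(i < j) (tb_Apow A i *m B).

Definition tb_Qi (R : realFieldType) (n : nat) (A Q : 'M[R]_n) (i : nat) : 'M[R]_n :=
  \sum_(j < i) ((tb_Apow A j)^T *m Q *m tb_Apow A j).

Definition tb_Si (R : realFieldType) (n m : nat) (A Q : 'M[R]_n) (B : 'M[R]_(n, m))
  (i : nat) : 'M[R]_(n, m) :=
  \sum_(1 <= j < i) ((tb_Apow A j)^T *m Q *m tb_Bsum A B j).

Definition tb_Ri (R : realFieldType) (n m : nat) (A Q : 'M[R]_n) (B : 'M[R]_(n, m))
  (Rc : 'M[R]_m) (i : nat) : 'M[R]_m :=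
  i%:R *: Rc + \sum_(1 <= j < i) ((tb_Bsum A B j)^T *m Q *m tb_Bsum A B j).

Definition tb_tildeInv (R : realFieldType) (n m : nat) (A Q : 'M[R]_n)
  (B : 'M[R]_(n, m)) (Rc : 'M[R]_m) (i : nat) : 'M[R]_(n + m) :=
  invmx (block_mx (tb_Qi A Q i) (tb_Si A Q B i) (tb_Si A Q B i)^T (tb_Ri A Q B Rc i)).

Definition tb_Qt (R : realFieldType) (n m : nat) (A Q : 'M[R]_n) (B : 'M[R]_(n, m))
  (Rc : 'M[R]_m) (i : nat) : 'M[R]_n := ulsubmx (tb_tildeInv A Q B Rc i).
Definition tb_St (R : realFieldType) (n m : nat) (A Q : 'M[R]_n) (B : 'M[R]_(n, m))
  (Rc : 'M[R]_m) (i : nat) : 'M[R]_(n, m) := ursubmx (tb_tildeInv A Q B Rc i).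
Definition tb_Rt (R : realFieldType) (n m : nat) (A Q : 'M[R]_n) (B : 'M[R]_(n, m))
  (Rc : 'M[R]_m) (i : nat) : 'M[R]_m := drsubmx (tb_tildeInv A Q B Rc i).

(* The tb_LMI matrix, block sizes n, n, m, n:
   [ X            0      0      Z ]
   [ 0            Q~     S~     X ]
   [ 0            S~^T   R~     Y ]
   [ Z^T          X      Y^T    X ]    with Z = A_i X + B_i Y, i = pM. *)
Definition tb_LMI (R : realFieldType) (n m : nat) (A Q : 'M[R]_n) (B : 'M[R]_(n, m))
  (Rc : 'M[R]_m) (X : 'M[R]_n) (Y : 'M[R]_(m, n)) (i : nat)
  : 'M[R]_((n + (n + m)) + n) :=
  let Z := tb_Apow A i *m X + tb_Bsum A B i *m Y in
  block_mx
    (block_mx X 0 0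
       (block_mx (tb_Qt A Q B Rc i) (tb_St A Q B Rc i) (tb_St A Q B Rc i)^T (tb_Rt A Q B Rc i)))
    (col_mx Z (col_mx X Y))
    (row_mx Z^T (row_mx X Y^T))
    X.

(* M := ceil(c / g) (for g >= 1) *)
Definition tb_Mceil (g c : nat) : nat := (c + g - 1) %/ g.

Definition tb_ostate (R : realFieldType) (n m : nat) := ('cV[R]_n * 'cV[R]_m * int)%type.

(* transition map f(xi, (v, j), sigma), sigma : bool encodes {0,1} (true = 1) *)
Definition tb_ftrans (R : realFieldType) (n m : nat) (A : 'M[R]_n) (B : 'M[R]_(n, m))
  (g c b : nat) (xi : tb_ostate R n m) (v : 'cV[R]_m) (j : nat) (sigma : bool)
  : tb_ostate R n m :=
  let: (x, w, beta) := xi in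
  (tb_Apow A j *m x + (if sigma then tb_Bsum A B j *m v else tb_Bsum A B j *m w),
   (if sigma then v else w),
   Num.min (beta + (j * g)%:Z - c%:Z) b%:Z).

Definition tb_stage (R : realFieldType) (n m : nat) (Q : 'M[R]_n) (Rc : 'M[R]_m)
  (xi : tb_ostate R n m) (v : 'cV[R]_m) (sigma : bool) : R :=
  let: (x, w, _) := xi in
  (x^T *m Q *m x) 0 0 + (if sigma then (v^T *m Rc *m v) 0 0 else (w^T *m Rc *m w) 0 0).

Definition tb_lam (R : realFieldType) (n m : nat) (A Q : 'M[R]_n) (B : 'M[R]_(n, m))
  (Rc : 'M[R]_m) (g c b : nat) (xi : tb_ostate R n m) (v : 'cV[R]_m) (Delta : nat)
  (sigma : bool) : R :=
  tb_stage Q Rc xi v sigma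
  + \sum_(1 <= j < Delta) tb_stage Q Rc (tb_ftrans A B g c b xi v j sigma) v sigma.

(* iterates f^{kappa_f}_p; the value of v is irrelevant for sigma = 0, we use 0.
   tb_fk 0 xi := xi (only used as a convention). *)
Fixpoint tb_fk (R : realFieldType) (n m : nat) (A : 'M[R]_n) (B : 'M[R]_(n, m))
  (g c b : nat) (Kf : 'M[R]_(m, n)) (p : nat) (xi : tb_ostate R n m) : tb_ostate R n m :=
  match p with
  | 0 => xi
  | 1 => tb_ftrans A B g c b xi (Kf *m xi.1.1) (tb_Mceil g c) true
  | p'.+1 => tb_ftrans A B g c b (tb_fk A B g c b Kf p' xi) 0 (tb_Mceil g c) false
  end.

Definition tb_Xi_set (R : realFieldType) (n m : nat) (Xs : set 'cV[R]_n)
  (Us : set 'cV[R]_m) (b : nat) : set (tb_ostate R n m) :=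
  [set xi | Xs xi.1.1 /\ Us xi.1.2 /\ (0 <= xi.2 <= b%:Z)].

Definition tb_Xif_set (R : realFieldType) (n m : nat) (Xfs : set 'cV[R]_n)
  (Us : set 'cV[R]_m) (g c b : nat) : set (tb_ostate R n m) :=
  [set xi | Xfs xi.1.1 /\ Us xi.1.2 /\ (c%:Z - g%:Z <= xi.2 <= b%:Z)].

Definition tb_Pi_set (R : realFieldType) (m : nat) (Us : set 'cV[R]_m) (Dbar : nat)
  : set ('cV[R]_m * nat) :=
  [set pi | Us pi.1 /\ (1 <= pi.2 <= Dbar)%N].

Definition tb_kappaf (R : realFieldType) (n m : nat) (Kf : 'M[R]_(m, n)) (g c : nat)
  (xi : tb_ostate R n m) : 'cV[R]_m * nat := (Kf *m xi.1.1, tb_Mceil g c).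

Definition tb_Vf (R : realFieldType) (n m : nat) (Pf : 'M[R]_n) (xi : tb_ostate R n m) : R :=
  (xi.1.1^T *m Pf *m xi.1.1) 0 0.

From HB Require Import structures.
From mathcomp Require Import all_boot all_order all_algebra.
From mathcomp Require Import all_classical all_reals all_analysis.
From mathcomp Require Import zify lra.
Import Order.TTheory GRing.Theory Num.Theory.
Import numFieldNormedType.Exports.
Set Implicit Arguments. Unset Strict Implicit. Unset Printing Implicit Defensive.
Local Open Scope ring_scope.
Local Open Scope classical_set_scope.

(** Under the terminal controller the input u = K_f x is sent once and then
    held: while the next p - 1 packets are lost the plant keeps applying u.
    So after p intervals of length M the state is the open-loop prediction
    A_{pM} x + B_{pM} u, and the p interval costs add up to the quadratic
    form [x; u]^T H [x; u] with H = [Q_{pM} S_{pM}; S_{pM}^T R_{pM}].  By a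
    Schur complement argument the LMI yields
    x_+^T P_f x_+ - x^T P_f x + [x; u]^T H [x; u] <= 0, which is (iv).
    Since M g >= c, every interval of length M refills the bucket by at least
    the c tokens a transmission costs, so beta stays in [c - g, b]; the other
    claims restate the terminal set assumption. *)

Section BilinearForm.
Variable R : realFieldType.

Definition bform k l (M : 'M[R]_(k, l)) (u : 'cV[R]_k) (v : 'cV[R]_l) : R :=
  (u^T *m M *m v) 0 0.

Lemma bformDl k l (M : 'M[R]_(k, l)) u1 u2 v :
  bform M (u1 + u2) v = bform M u1 v + bform M u2 v.
Proof. by rewrite /bform linearD /= !mulmxDl mxE. Qed.

Lemma bformDr k l (M : 'M[R]_(k, l)) u v1 v2 :
  bform M u (v1 + v2) = bform M u v1 + bform M u v2.
Proof. by rewrite /bform !mulmxDr mxE. Qed.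

Lemma bformNl k l (M : 'M[R]_(k, l)) u v : bform M (- u) v = - bform M u v.
Proof. by rewrite /bform linearN /= !mulNmx mxE. Qed.

Lemma bformNr k l (M : 'M[R]_(k, l)) u v : bform M u (- v) = - bform M u v.
Proof. by rewrite /bform !mulmxN mxE. Qed.

Lemma bform0l k l (M : 'M[R]_(k, l)) v : bform M 0 v = 0.
Proof. by rewrite /bform trmx0 !mul0mx mxE. Qed.

Lemma bform0 k l (u : 'cV[R]_k) (v : 'cV[R]_l) : bform 0 u v = 0.
Proof. by rewrite /bform mulmx0 mul0mx mxE. Qed.

Lemma bform_add k l (M1 M2 : 'M[R]_(k, l)) u v :
  bform (M1 + M2) u v = bform M1 u v + bform M2 u v.
Proof. by rewrite /bform mulmxDr mulmxDl mxE. Qed.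

Lemma bform_scale k l (a : R) (M : 'M[R]_(k, l)) u v :
  bform (a *: M) u v = a * bform M u v.
Proof. by rewrite /bform -scalemxAr -scalemxAl mxE. Qed.

Lemma bform_sum k l (I : Type) (r : seq I) (P : pred I) (F : I -> 'M[R]_(k, l)) u v :
  bform (\sum_(i <- r | P i) F i) u v = \sum_(i <- r | P i) bform (F i) u v.
Proof.
elim/big_rec2: _ => [|i y1 y2 _ <-]; first by rewrite bform0.
by rewrite bform_add.
Qed.

Lemma bform_tr k l (M : 'M[R]_(k, l)) u v : bform M^T v u = bform M u v.
Proof.
rewrite /bform.
have -> : v^T *m M^T *m u = (u^T *m M *m v)^T by rewrite !trmx_mul trmxK mulmxA.
by rewrite mxE.
Qed.

Lemma bform_trmull k k' l (A : 'M[R]_(k', k)) (M : 'M[R]_(k', l)) u v :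
  bform (A^T *m M) u v = bform M (A *m u) v.
Proof. by rewrite /bform trmx_mul !mulmxA. Qed.

Lemma bform_mulr k l l' (M : 'M[R]_(k, l)) (A : 'M[R]_(l, l')) u v :
  bform (M *m A) u v = bform M u (A *m v).
Proof. by rewrite /bform !mulmxA. Qed.

Lemma bform_conj k k' l l' (L : 'M[R]_(k', k)) (M : 'M[R]_(k', l')) (L' : 'M[R]_(l', l))
    u v :
  bform (L^T *m M *m L') u v = bform M (L *m u) (L' *m v).
Proof. by rewrite /bform trmx_mul !mulmxA. Qed.

Lemma bform_col k1 k2 l (M1 : 'M[R]_(k1, l)) (M2 : 'M[R]_(k2, l)) u1 u2 v :
  bform (col_mx M1 M2) (col_mx u1 u2) v = bform M1 u1 v + bform M2 u2 v.
Proof. by rewrite /bform tr_col_mx mul_row_col mulmxDl mxE. Qed.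

Lemma bform_row k l1 l2 (M1 : 'M[R]_(k, l1)) (M2 : 'M[R]_(k, l2)) u v1 v2 :
  bform (row_mx M1 M2) u (col_mx v1 v2) = bform M1 u v1 + bform M2 u v2.
Proof. by rewrite /bform mul_mx_row mul_row_col mxE. Qed.

Lemma bform_block k1 k2 (M11 : 'M[R]_k1) (M12 : 'M[R]_(k1, k2))
    (M21 : 'M[R]_(k2, k1)) (M22 : 'M[R]_k2) u1 u2 :
  bform (block_mx M11 M12 M21 M22) (col_mx u1 u2) (col_mx u1 u2) =
  bform M11 u1 u1 + bform M12 u1 u2 + bform M21 u2 u1 + bform M22 u2 u2.
Proof. by rewrite /block_mx bform_col !bform_row addrA. Qed.

Lemma tb_pd_bform_ge0 k (M : 'M[R]_k) v : tb_pd M -> 0 <= bform M v v.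
Proof.
case=> _ Mpos; have [->|v_neq0] := eqVneq v 0; first by rewrite bform0l.
exact/ltW/Mpos.
Qed.

Lemma bform_pos_unitmx k (M : 'M[R]_k) :
  (forall v, v != 0 -> 0 < bform M v v) -> M \in unitmx.
Proof.
move=> Mpos; rewrite unitmxE unitfE; apply/negP => /det0P [v v_neq0 vM0].
have : v^T != 0 by apply: contra v_neq0 => /eqP; rewrite -trmx0 => /trmx_inj ->.
by move/Mpos; rewrite /bform trmxK vM0 mul0mx mxE ltxx.
Qed.

End BilinearForm.

Lemma sum_nat_blocks (V : nmodType) (F : nat -> V) (M p : nat) :
  \sum_(0 <= i < p) \sum_(0 <= k < M) F (k + i * M)%N = \sum_(0 <= k < p * M) F k.
Proof.
elim: p => [|p IH]; first by rewrite !big_geq.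
rewrite big_nat_recr //= IH [RHS](big_cat_nat _ (n := p * M)) //=; last first.
  by rewrite mulSn leq_addl.
congr (_ + _); rewrite -[in RHS](add0n (p * M)%N) big_addn.
by rewrite mulSn addnK.
Qed.

Section TokenBucket.
Variables g c b : nat.
Hypotheses (g_gt0 : (1 <= g)%N) (g_le_c : (g <= c)%N).

Lemma tb_Mceil_gt0 : (1 <= tb_Mceil g c)%N.
Proof. rewrite /tb_Mceil; lia. Qed.

Lemma tb_Mceil_ge : (c <= tb_Mceil g c * g)%N.
Proof. rewrite /tb_Mceil; lia. Qed.

Lemma bucket_update_range (beta : int) j :
  c%:Z - g%:Z <= beta -> (1 <= j)%N ->
  0 <= Num.min (beta + (j * g)%:Z - c%:Z) b%:Z <= b%:Z.
Proof.
move=> beta_ge j_gt0; rewrite ge_min lexx orbT andbT le_min.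
have : (g <= j * g)%N by rewrite leq_pmull.
lia.
Qed.

Lemma bucket_update_terminal (beta : int) :
  c%:Z - g%:Z <= beta <= b%:Z ->
  c%:Z - g%:Z <= Num.min (beta + (tb_Mceil g c * g)%:Z - c%:Z) b%:Z <= b%:Z.
Proof.
move=> /andP[beta_ge beta_le]; rewrite ge_min lexx orbT andbT le_min.
have := tb_Mceil_ge; lia.
Qed.

End TokenBucket.

Section OpenLoop.
Variables (R : realFieldType) (n m : nat) (A : 'M[R]_n) (B : 'M[R]_(n, m)).

Definition predict (x : 'cV[R]_n) (u : 'cV[R]_m) (k : nat) : 'cV[R]_n :=
  tb_Apow A k *m x + tb_Bsum A B k *m u.

Lemma tb_ApowD a b : tb_Apow A (a + b) = tb_Apow A a *m tb_Apow A b.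
Proof.
elim: a => [|a IH]; first by rewrite mul1mx.
by rewrite addSn -[tb_Apow A _.+1]/(A *m tb_Apow A _) IH mulmxA.
Qed.

Lemma tb_Bsum0 : tb_Bsum A B 0 = 0.
Proof. by rewrite /tb_Bsum big_ord0. Qed.

Lemma tb_BsumD a b :
  tb_Bsum A B (a + b) = tb_Bsum A B a + tb_Apow A a *m tb_Bsum A B b.
Proof.
rewrite /tb_Bsum big_split_ord /= mulmx_sumr; congr (_ + _).
by apply: eq_bigr => i _; rewrite tb_ApowD mulmxA.
Qed.

Lemma predict0 x u : predict x u 0 = x.
Proof. by rewrite /predict tb_Bsum0 mul0mx addr0 mul1mx. Qed.

Lemma predictD x u a b : predict (predict x u b) u a = predict x u (a + b).
Proof.
rewrite /predict tb_ApowD tb_BsumD mulmxDr !mulmxA mulmxDl -!addrA.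
by congr (_ + _); rewrite addrC.
Qed.

Lemma predict_feedback (K : 'M[R]_(m, n)) x k :
  (tb_Apow A k + tb_Bsum A B k *m K) *m x = predict x (K *m x) k.
Proof. by rewrite mulmxDl -mulmxA. Qed.

Variables (g c b : nat).

Lemma tb_ftrans_state xi v j (s : bool) :
  (tb_ftrans A B g c b xi v j s).1.1 = predict xi.1.1 (if s then v else xi.1.2) j.
Proof. by case: xi => [[x w] beta]; case: s. Qed.

Lemma tb_ftrans_input xi v j (s : bool) :
  (tb_ftrans A B g c b xi v j s).1.2 = if s then v else xi.1.2.
Proof. by case: xi => [[x w] beta]; case: s. Qed.

Lemma tb_ftrans_bucket xi v j s :
  (tb_ftrans A B g c b xi v j s).2 = Num.min (xi.2 + (j * g)%:Z - c%:Z) b%:Z.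
Proof. by case: xi => [[x w] beta]. Qed.

Lemma tb_fkS Kf p xi : (1 <= p)%N ->
  tb_fk A B g c b Kf p.+1 xi =
  tb_ftrans A B g c b (tb_fk A B g c b Kf p xi) 0 (tb_Mceil g c) false.
Proof. by case: p. Qed.

Lemma tb_fk_state Kf p xi : (1 <= p)%N ->
  (tb_fk A B g c b Kf p xi).1.1 = predict xi.1.1 (Kf *m xi.1.1) (p * tb_Mceil g c)
  /\ (tb_fk A B g c b Kf p xi).1.2 = Kf *m xi.1.1.
Proof.
elim: p => [//|p IH] _; have [->|p_gt0] := posnP p.
  by rewrite mul1n /= tb_ftrans_state tb_ftrans_input.
rewrite tb_fkS // tb_ftrans_state tb_ftrans_input /=.
by have [-> ->] := IH p_gt0; rewrite predictD mulSn.
Qed.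

Lemma tb_fk_bucket Kf p xi :
  (1 <= g)%N -> (g <= c)%N -> c%:Z - g%:Z <= xi.2 <= b%:Z -> (1 <= p)%N ->
  c%:Z - g%:Z <= (tb_fk A B g c b Kf p xi).2 <= b%:Z.
Proof.
move=> g_gt0 g_le_c xi_bucket; elim: p => [//|p IH] _.
have [->|p_gt0] := posnP p; last rewrite tb_fkS //.
all: rewrite tb_ftrans_bucket; apply: bucket_update_terminal => //.
exact: IH.
Qed.

End OpenLoop.

Section Cost.
Variables (R : realFieldType) (n m : nat) (A Q : 'M[R]_n) (B : 'M[R]_(n, m)) (Rc : 'M[R]_m).

Definition stage_cost (x : 'cV[R]_n) (u : 'cV[R]_m) (k : nat) : R :=
  bform Q (predict A B x u k) (predict A B x u k) + bform Rc u u.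

Definition cost_mx (N : nat) : 'M[R]_(n + m) :=
  block_mx (tb_Qi A Q N) (tb_Si A Q B N) (tb_Si A Q B N)^T (tb_Ri A Q B Rc N).

Lemma tb_stage_cost xi v (s : bool) :
  tb_stage Q Rc xi v s = stage_cost xi.1.1 (if s then v else xi.1.2) 0.
Proof. by rewrite /stage_cost predict0; case: xi => [[x w] beta]; case: s. Qed.

Lemma tb_lam_cost g c b xi v D (s : bool) : (1 <= D)%N ->
  tb_lam A Q B Rc g c b xi v D s =
  \sum_(0 <= k < D) stage_cost xi.1.1 (if s then v else xi.1.2) k.
Proof.
move=> D_gt0; rewrite /tb_lam (big_ltn D_gt0) tb_stage_cost; congr (_ + _).
apply: eq_bigr => k _.
by case: s; rewrite tb_stage_cost tb_ftrans_state ?tb_ftrans_input /stage_cost predict0.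
Qed.

Lemma stage_cost_predict x u a k :
  stage_cost (predict A B x u a) u k = stage_cost x u (k + a).
Proof. by rewrite /stage_cost predictD. Qed.

Lemma tb_lam_fk_sum g c b Kf p xi : (1 <= p)%N -> (1 <= tb_Mceil g c)%N ->
  tb_lam A Q B Rc g c b xi (Kf *m xi.1.1) (tb_Mceil g c) true
  + \sum_(1 <= i < p) tb_lam A Q B Rc g c b (tb_fk A B g c b Kf i xi)
                        (Kf *m xi.1.1) (tb_Mceil g c) false
  = \sum_(0 <= k < p * tb_Mceil g c) stage_cost xi.1.1 (Kf *m xi.1.1) k.
Proof.
move=> p_gt0 M_gt0; rewrite -sum_nat_blocks (big_ltn p_gt0) tb_lam_cost //.
congr (_ + _); first by apply: eq_bigr => k _; rewrite mul0n addn0.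
apply: eq_big_nat => i /andP[i_gt0 _]; rewrite tb_lam_cost //.
have [-> ->] := tb_fk_state A B g c b Kf xi i_gt0.
by apply: eq_bigr => k _; rewrite stage_cost_predict.
Qed.

Hypothesis Q_sym : Q^T = Q.

Lemma sum_stage_cost x u N : (1 <= N)%N ->
  \sum_(0 <= k < N) stage_cost x u k = bform (cost_mx N) (col_mx x u) (col_mx x u).
Proof.
move=> N_gt0.
have stage_cost_expand k : stage_cost x u k =
    bform ((tb_Apow A k)^T *m Q *m tb_Apow A k) x x
    + 2 * bform ((tb_Apow A k)^T *m Q *m tb_Bsum A B k) x u
    + bform ((tb_Bsum A B k)^T *m Q *m tb_Bsum A B k) u u + bform Rc u u.
  rewrite /stage_cost /predict !bform_conj bformDl !bformDr.
  by rewrite -[bform Q (tb_Bsum A B k *m u) _]bform_tr Q_sym; lra.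
rewrite bform_block bform_tr /cost_mx /tb_Qi /tb_Si /tb_Ri.
rewrite bform_add bform_scale !bform_sum.
rewrite -(big_mkord xpredT (fun j => bform ((tb_Apow A j)^T *m Q *m tb_Apow A j) x x)).
rewrite (eq_bigr _ (fun k _ => stage_cost_expand k)).
rewrite !big_split /= sumr_const_nat subn0 mulr_natl -mulr_sumr.
rewrite [X in _ + _ * X + _ + _](big_ltn N_gt0) [X in _ + _ + X + _](big_ltn N_gt0).
rewrite tb_Bsum0 !mulmx0 !bform0; lra.
Qed.

Hypothesis Rc_sym : Rc^T = Rc.

Lemma cost_mx_sym N : (cost_mx N)^T = cost_mx N.
Proof.
rewrite /cost_mx tr_block_mx trmxK; congr block_mx.
  rewrite /tb_Qi linear_sum; apply: eq_bigr => j _ /=.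
  by rewrite !trmx_mul trmxK Q_sym mulmxA.
rewrite /tb_Ri linearD linearZ /= Rc_sym linear_sum; congr (_ + _).
apply: eq_bigr => j _ /=.
by rewrite !trmx_mul trmxK Q_sym mulmxA.
Qed.

Lemma tb_LMI_cost_mx X Y N :
  tb_LMI A Q B Rc X Y N =
  block_mx (block_mx X 0 0 (invmx (cost_mx N)))
    (col_mx (tb_Apow A N *m X + tb_Bsum A B N *m Y) (col_mx X Y))
    (row_mx (tb_Apow A N *m X + tb_Bsum A B N *m Y)^T (row_mx X Y^T)) X.
Proof.
have inv_sym : (invmx (cost_mx N))^T = invmx (cost_mx N).
  by rewrite trmx_inv cost_mx_sym.
rewrite /tb_LMI /tb_Qt /tb_St /tb_Rt /tb_tildeInv -/(cost_mx N).
by rewrite trmx_ursub inv_sym submxK.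
Qed.

Lemma cost_mx_unit N : (1 <= N)%N -> tb_pd Q -> tb_pd Rc -> cost_mx N \in unitmx.
Proof.
move=> N_gt0 Q_pd Rc_pd; apply: bform_pos_unitmx => y y_neq0.
rewrite -(vsubmxK y) -sum_stage_cost // (big_ltn N_gt0).
apply: ltr_wpDr; first by apply: sumr_ge0 => k _; rewrite addr_ge0 ?tb_pd_bform_ge0.
rewrite /stage_cost predict0.
have [x0|x_neq0] := eqVneq (usubmx y) 0.
  rewrite x0 bform0l add0r; case: Rc_pd => _; apply.
  by apply: contra y_neq0 => /eqP u0; rewrite -(vsubmxK y) x0 u0 col_mx0.
by rewrite ltr_wpDr ?tb_pd_bform_ge0 //; case: Q_pd => _; apply.
Qed.

End Cost.

Lemma lmi_lyapunov_decrease (R : realFieldType) n m (X : 'M[R]_n) (Y : 'M[R]_(m, n))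
    (F : 'M[R]_n) (G : 'M[R]_(n, m)) (H : 'M[R]_(n + m)) x :
  X \in unitmx -> X^T = X -> H \in unitmx ->
  tb_psd (block_mx (block_mx X 0 0 (invmx H))
           (col_mx (F *m X + G *m Y) (col_mx X Y))
           (row_mx (F *m X + G *m Y)^T (row_mx X Y^T)) X) ->
  bform (invmx X) (F *m x + G *m (Y *m invmx X *m x)) (F *m x + G *m (Y *m invmx X *m x))
  - bform (invmx X) x x
  + bform H (col_mx x (Y *m invmx X *m x)) (col_mx x (Y *m invmx X *m x)) <= 0.
Proof.
move=> X_unit X_sym H_unit [_ lmi_psd].
set P := invmx X; set Z := F *m X + G *m Y; set z := P *m x.
set xp := F *m x + _; set w := col_mx x _.
have Zz : Z *m z = xp by rewrite /Z /z /xp mulmxDl -!mulmxA (mulmxA X) mulmxV // mul1mx.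
have Wz : col_mx X Y *m z = w by rewrite mul_col_mx /z mulmxA mulmxV // mul1mx /w mulmxA.
have XP : X *m P = 1%:M by rewrite mulmxV.
have HH : invmx H *m H = 1%:M by rewrite mulVmx.
(* The LMI evaluated at [- P xp; - H w; P x] completes both squares. *)
have := lmi_psd (col_mx (col_mx (- (P *m xp)) (- (H *m w))) z).
rewrite -/(bform _ _ _) !bform_block !bform0 !addr0 bform_col bform_row.
have -> : row_mx X Y^T = (col_mx X Y)^T by rewrite tr_col_mx X_sym.
rewrite bform_tr.
have -> : bform X (- (P *m xp)) (- (P *m xp)) = bform P xp xp.
  by rewrite bformNl bformNr opprK -bform_trmull -bform_mulr -mulmxA XP mulmx1 bform_tr.
have -> : bform (invmx H) (- (H *m w)) (- (H *m w)) = bform H w w.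
  by rewrite bformNl bformNr opprK -bform_trmull -bform_mulr -mulmxA HH mulmx1 bform_tr.
have ZP : bform Z (- (P *m xp)) z = - bform P xp xp.
  by rewrite bformNl -bform_trmull bform_mulr Zz bform_tr.
have -> : bform (col_mx X Y) (- (H *m w)) z = - bform H w w.
  by rewrite bformNl -bform_trmull bform_mulr Wz bform_tr.
have -> : bform X z z = bform P x x.
  by rewrite /z -bform_trmull -bform_mulr -mulmxA XP mulmx1 bform_tr.
rewrite bform_tr ZP; lra.
Qed.

Section TerminalIngredients.
Variables (R : realFieldType) (n m : nat) (A Q : 'M[R]_n) (B : 'M[R]_(n, m)) (Rc : 'M[R]_m).
Variables (Xs Xfs : set 'cV[R]_n) (Us : set 'cV[R]_m) (g c b P : nat).
Variables (X : 'M[R]_n) (Y : 'M[R]_(m, n)).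
Local Notation M := (tb_Mceil g c).
Local Notation Kf := (Y *m invmx X).
Local Notation fk := (tb_fk A B g c b Kf).

Hypotheses (g_gt0 : (1 <= g)%N) (g_le_c : (g <= c)%N).
Hypothesis Kf_Xf : forall x, Xfs x -> Us (Kf *m x).
Hypothesis Xf_invariant : forall p, (1 <= p <= P.+1)%N -> forall x, Xfs x ->
  Xfs ((tb_Apow A (p * M) + tb_Bsum A B (p * M) *m Kf) *m x).
Hypothesis Xf_intersample : forall j p, (1 <= j <= M - 1)%N -> (p <= P)%N ->
  forall x, Xfs x -> Xs ((tb_Apow A (p * M + j) + tb_Bsum A B (p * M + j) *m Kf) *m x).

Lemma tb_kappaf_admissible Dbar xi : (M <= Dbar)%N ->
  tb_Xif_set Xfs Us g c b xi -> tb_Pi_set Us Dbar (tb_kappaf Kf g c xi).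
Proof. by move=> M_le_Dbar [x_Xf _]; split; [exact: Kf_Xf | rewrite tb_Mceil_gt0]. Qed.

Lemma tb_fk_terminal p xi : (1 <= p <= P.+1)%N ->
  tb_Xif_set Xfs Us g c b xi -> tb_Xif_set Xfs Us g c b (fk p xi).
Proof.
move=> /andP[p_gt0 p_le] [x_Xf [_ xi_bucket]].
have [x_fk w_fk] := tb_fk_state A B g c b Kf xi p_gt0.
split; last split; rewrite ?x_fk ?w_fk.
- by rewrite -predict_feedback; apply: Xf_invariant; rewrite ?p_gt0.
- exact: Kf_Xf.
- exact: tb_fk_bucket.
Qed.

Lemma tb_ftrans_sent_admissible xi j : (1 <= j <= M - 1)%N ->
  tb_Xif_set Xfs Us g c b xi ->
  tb_Xi_set Xs Us b (tb_ftrans A B g c b xi (Kf *m xi.1.1) j true).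
Proof.
move=> j_range [x_Xf [_ /andP[xi_bucket _]]].
split; last split; rewrite ?tb_ftrans_state ?tb_ftrans_input ?tb_ftrans_bucket.
- by have := Xf_intersample j_range (leq0n P) x_Xf; rewrite mul0n add0n predict_feedback.
- exact: Kf_Xf.
- by apply: bucket_update_range => //; case/andP: j_range.
Qed.

Lemma tb_ftrans_lost_admissible xi p j v : (1 <= p <= P)%N -> (1 <= j <= M - 1)%N ->
  tb_Xif_set Xfs Us g c b xi ->
  tb_Xi_set Xs Us b (tb_ftrans A B g c b (fk p xi) v j false).
Proof.
move=> /andP[p_gt0 p_le] j_range [x_Xf [_ xi_bucket]].
have [x_fk w_fk] := tb_fk_state A B g c b Kf xi p_gt0.
have /andP[fk_bucket _] := tb_fk_bucket A B Kf g_gt0 g_le_c xi_bucket p_gt0.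
split; last split;
  rewrite ?tb_ftrans_state ?tb_ftrans_input ?tb_ftrans_bucket ?x_fk ?w_fk.
- by rewrite predictD addnC -predict_feedback; exact: Xf_intersample.
- exact: Kf_Xf.
- by apply: bucket_update_range => //; case/andP: j_range.
Qed.

Lemma tb_Vf_decrease p xi : tb_pd Q -> tb_pd Rc -> tb_pd X ->
  (1 <= p)%N -> tb_psd (tb_LMI A Q B Rc X Y (p * M)) ->
  tb_Vf (invmx X) (fk p xi) - tb_Vf (invmx X) xi <=
    - tb_lam A Q B Rc g c b xi (Kf *m xi.1.1) M true
    - \sum_(1 <= i < p) tb_lam A Q B Rc g c b (fk i xi) (Kf *m xi.1.1) M false.
Proof.
move=> Q_pd Rc_pd [X_sym X_pos] p_gt0 lmi.
have Q_sym : Q^T = Q by case: Q_pd.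
have Rc_sym : Rc^T = Rc by case: Rc_pd.
have N_gt0 : (1 <= p * M)%N by rewrite muln_gt0 p_gt0 tb_Mceil_gt0.
have cost := tb_lam_fk_sum A Q B Rc b Kf xi p_gt0 (tb_Mceil_gt0 g_gt0 g_le_c).
rewrite sum_stage_cost // in cost.
rewrite tb_LMI_cost_mx // in lmi.
have := lmi_lyapunov_decrease xi.1.1 (bform_pos_unitmx X_pos) X_sym
  (cost_mx_unit A B Q_sym N_gt0 Q_pd Rc_pd) lmi.
have [x_fk _] := tb_fk_state A B g c b Kf xi p_gt0.
rewrite /tb_Vf x_fk /predict -/(bform _ _ _) -/(bform _ xi.1.1 xi.1.1).
lra.
Qed.

End TerminalIngredients.

Unset Implicit Arguments.

Theorem lemma1 (R : realType) (n m : nat)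
  (A : 'M[R]_n) (B : 'M[R]_(n, m)) (Q : 'M[R]_n) (Rc : 'M[R]_m)
  (Xs : set 'cV[R]_n) (Us : set 'cV[R]_m) (Xfs : set 'cV[R]_n)
  (g c b P Dbar : nat) (X : 'M[R]_n) (Y : 'M[R]_(m, n)) :
  closed Xs -> Xs 0 -> closed Us -> Us 0 ->
  tb_pd Q -> tb_pd Rc ->
  (1 <= g)%N -> (g <= c)%N -> (c <= b)%N ->
  let M := tb_Mceil g c in
  let Kf := Y *m invmx X in
  let Pf := invmx X in
  Xfs `<=` Xs -> closed Xfs -> Xfs 0 ->
  (forall x, Xfs x -> Us (Kf *m x)) ->
  (forall p, (1 <= p <= P.+1)%N -> forall x, Xfs x ->
     Xfs ((tb_Apow A (p * M) + tb_Bsum A B (p * M) *m Kf) *m x)) ->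
  (forall j p, (1 <= j <= M - 1)%N -> (p <= P)%N -> forall x, Xfs x ->
     Xs ((tb_Apow A (p * M + j) + tb_Bsum A B (p * M + j) *m Kf) *m x)) ->
  (M <= Dbar)%N ->
  tb_pd X ->
  (forall p, (1 <= p <= P.+1)%N -> tb_psd (tb_LMI A Q B Rc X Y (p * M))) ->
  (forall xi, tb_Xif_set Xfs Us g c b xi -> tb_Pi_set Us Dbar (tb_kappaf Kf g c xi))
  /\
  (forall p, (1 <= p <= P.+1)%N -> forall xi, tb_Xif_set Xfs Us g c b xi ->
     tb_Xif_set Xfs Us g c b (tb_fk A B g c b Kf p xi))
  /\
  ((forall xi, tb_Xif_set Xfs Us g c b xi -> forall j, (1 <= j <= M - 1)%N ->
      tb_Xi_set Xs Us b (tb_ftrans A B g c b xi (Kf *m xi.1.1) j true))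
   /\
   (forall xi, tb_Xif_set Xfs Us g c b xi -> forall p j (v : 'cV[R]_m),
      (1 <= p <= P)%N -> (1 <= j <= M - 1)%N ->
      tb_Xi_set Xs Us b (tb_ftrans A B g c b (tb_fk A B g c b Kf p xi) v j false)))
  /\
  (forall p, (1 <= p <= P.+1)%N -> forall xi, tb_Xif_set Xfs Us g c b xi ->
     tb_Vf Pf (tb_fk A B g c b Kf p xi) - tb_Vf Pf xi <=
       - tb_lam A Q B Rc g c b xi (tb_kappaf Kf g c xi).1 (tb_kappaf Kf g c xi).2 true
       - \sum_(1 <= i < p) tb_lam A Q B Rc g c b (tb_fk A B g c b Kf i xi)
                 (tb_kappaf Kf g c xi).1 (tb_kappaf Kf g c xi).2 false).
Proof.
move=> _ _ _ _ Q_pd Rc_pd g_gt0 g_le_c _ M Kf Pf; rewrite {}/M {}/Kf {}/Pf.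
move=> _ _ _ Kf_Xf Xf_inv Xf_inter M_le_Dbar X_pd lmi.
split; [|split; [|split; [split|]]].
- move=> xi xi_Xf; exact: (tb_kappaf_admissible g_gt0 g_le_c Kf_Xf M_le_Dbar xi_Xf).
- move=> p p_range xi xi_Xf.
  exact: (tb_fk_terminal g_gt0 g_le_c Kf_Xf Xf_inv p_range xi_Xf).
- move=> xi xi_Xf j j_range.
  exact: (tb_ftrans_sent_admissible g_gt0 g_le_c Kf_Xf Xf_inter j_range xi_Xf).
- move=> xi xi_Xf p j v p_range j_range.
  exact: (tb_ftrans_lost_admissible g_gt0 g_le_c Kf_Xf Xf_inter v p_range j_range xi_Xf).
move=> p p_range xi _; case/andP: (p_range) => p_gt0 _.
exact: tb_Vf_decrease (lmi p p_range).
Qed.
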